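(* Let $t$ be a normal linear lambda term with $R$-coloring $\pi$. Then the size $|\pi|$ equals the total number of leaves (occurrences of $\_$ as a leaf) in its underlying lambda skeleton; explicitly $|\pi| = |t|$, where $|\lambda x.t| = |t|$, $|x| = 1$ and $|t(u)| = |t|+|u|$. On the other hand, if $t$ is a neutral linear lambda term with $B$-coloring $\pi$, then $|\pi| = |t|-1$.
   Context: Lambda skeletons: graded sets $\mathrm{SLam}(i)$, least such that $\_ \in \mathrm{SLam}(1)$ (a leaf); $p\in\mathrm{SLam}(j), q\in\mathrm{SLam}(k)\Rightarrow p(q)\in\mathrm{SLam}(j+k)$; $p\in\mathrm{SLam}(i+1)\Rightarrow \lambda\_.p\in\mathrm{SLam}(i)$. A linear lambda term with free variables $\Gamma$ decorating $p$, written $[\Gamma]t\in\Lambda_1(p)$, is defined by the rules: $[x]x\in\Lambda_1(\_)$; from $[\Gamma]t\in\Lambda_1(p)$, $[\Delta]u\in\Lambda_1(q)$ infer $[\Gamma,\Delta]t(u)\in\Lambda_1(p(q))$; from $[x,\Gamma]t\in\Lambda_1(p)$ infer $[\Gamma]\lambda x.t\in\Lambda_1(\lambda\_.p)$; from $[\Gamma,y,x,\Delta]t\in\Lambda_1(p)$ infer $[\Gamma,x,y,\Delta]t\in\Lambda_1(p)$. Define $\mathrm{SNeu}(i)$, $\mathrm{SNF}(i)$ by the rules (v) $\_\in\mathrm{SNeu}(1)$; (a) $p\in\mathrm{SNeu}(j)$, $q\in\mathrm{SNF}(k)\Rightarrow p(q)\in\mathrm{SNeu}(j+k)$; (s) $p\in\mathrm{SNeu}(i)\Rightarrow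 p\in\mathrm{SNF}(i)$; ($\ell$) $p\in\mathrm{SNF}(i+1)\Rightarrow\lambda\_.p\in\mathrm{SNF}(i)$. A $B$-coloring (resp. $R$-coloring) of a skeleton $p\in\mathrm{SLam}(i)$ is a derivation of $p\in\mathrm{SNeu}(i)$ (resp. $p\in\mathrm{SNF}(i)$); a coloring of a linear term is a coloring of its skeleton. A linear term is neutral if it has a $B$-coloring and normal if it has an $R$-coloring. The size $|\pi|$ of a coloring $\pi$ is the number of uses of rule (s) in $\pi$. *)

From Stdlib Require Import List Arith.
Import ListNotations.

(* Lambda skeletons: _ (leaf), p(q), \_.p *)
Inductive skel : Type :=
| SLeaf : skel
| SApp : skel -> skel -> skel
| SLamb : skel -> skel.

Inductive SLam : nat -> skel -> Prop :=
| SLam_leaf : SLam 1 SLeaf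
| SLam_app : forall p q j k, SLam j p -> SLam k q -> SLam (j + k) (SApp p q)
| SLam_lam : forall p i, SLam (i + 1) p -> SLam i (SLamb p).

Inductive term : Type :=
| Var : nat -> term
| App : term -> term -> term
| Lam : nat -> term -> term.

Inductive Lin1 : list nat -> term -> skel -> Prop :=
| Lin1_var : forall x, Lin1 [x] (Var x) SLeaf
| Lin1_app : forall G D t u p q,
    Lin1 G t p -> Lin1 D u q -> Lin1 (G ++ D) (App t u) (SApp p q)
| Lin1_lam : forall x G t p,
    Lin1 (x :: G) t p -> Lin1 G (Lam x t) (SLamb p)
| Lin1_exch : forall G x y D t p,
    Lin1 (G ++ y :: x :: D) t p -> Lin1 (G ++ x :: y :: D) t p.

(* Colorings: derivations of p in SNeu(i) (B-colorings) and
   p in SNF(i) (R-colorings). *)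
Inductive SNeu : skel -> nat -> Type :=
| rule_v : SNeu SLeaf 1
| rule_a : forall p q j k, SNeu p j -> SNF q k -> SNeu (SApp p q) (j + k)
with SNF : skel -> nat -> Type :=
| rule_s : forall p i, SNeu p i -> SNF p i
| rule_l : forall p i, SNF p (i + 1) -> SNF (SLamb p) i.

Fixpoint size_neu {p i} (d : SNeu p i) : nat :=
  match d with
  | rule_v => 0
  | rule_a _ _ _ _ d1 d2 => size_neu d1 + size_nf d2
  end
with size_nf {p i} (d : SNF p i) : nat :=
  match d with
  | rule_s _ _ d1 => S (size_neu d1)
  | rule_l _ _ d1 => size_nf d1
  end.

Fixpoint tsize (t : term) : nat :=
  match t with
  | Var _ => 1
  | App t u => tsize t + tsize u
  | Lam _ t => tsize t
  end.

(* Each use of rule (s) closes a neutral subderivation, and a neutral skeleton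
   with k leaves takes k - 1 uses of (s): its head leaf is the only one not
   closed by (s), every argument of an application being a normal form. Since
   the leaves of the skeleton are the variable occurrences of the term, both
   sizes are determined by |t|. *)

From Stdlib Require Import List Arith Lia.

Fixpoint leaves (p : skel) : nat :=
  match p with
  | SLeaf => 1
  | SApp p q => leaves p + leaves q
  | SLamb p => leaves p
  end.

Lemma Lin1_tsize_leaves (G : list nat) (t : term) (p : skel) :
  Lin1 G t p -> tsize t = leaves p.
Proof. induction 1; simpl; lia. Qed.

Scheme SNeu_SNF_rect := Induction for SNeu Sort Type
  with SNF_SNeu_rect := Induction for SNF Sort Type.

Lemma size_neu_leaves (p : skel) (i : nat) (pi : SNeu p i) :
  S (size_neu pi) = leaves p.
Proof.
  induction pi using SNeu_SNF_rect
    with (P0 := fun p i (pi : SNF p i) => size_nf pi = leaves p);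
    simpl; lia.
Qed.

Lemma size_nf_leaves (p : skel) (i : nat) (pi : SNF p i) :
  size_nf pi = leaves p.
Proof.
  induction pi as [p i pi | p i pi IH]; simpl; [apply size_neu_leaves | exact IH].
Qed.

Theorem proposition2p11 :
  (forall (G : list nat) (t : term) (p : skel) (i : nat),
      Lin1 G t p -> forall pi : SNF p i, size_nf pi = tsize t) /\
  (forall (G : list nat) (t : term) (p : skel) (i : nat),
      Lin1 G t p -> forall pi : SNeu p i, size_neu pi = tsize t - 1).
Proof.
  split; intros G t p i Ht pi; rewrite (Lin1_tsize_leaves G t p Ht).
  - apply size_nf_leaves.
  - rewrite <- (size_neu_leaves p i pi); lia.
Qed.
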